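(* Assume $\tau_1+\tau_2=1$ and set $A_1=L$, $A_2=M$, $A_3=[A_1,A_2]$. Then, as identities of differential operators, $$[A_2,A_3]=\alpha_1\{A_1,A_2\}+\alpha_2A_2^2+\gamma_1A_1+\delta A_2+\epsilon_1,\qquad [A_3,A_1]=\alpha_2\{A_1,A_2\}+\alpha_1A_1^2+\gamma_2A_2+\delta A_1+\epsilon_2,$$ with $\alpha_1=-2$, $\alpha_2=2$, $\delta=\alpha(\alpha+\beta+1)+\beta-4\tau_0-2\tau_3$, $\gamma_1=1-\alpha^2+4(\tau_0+\tau_2-\tau_2^2)$, $\gamma_2=-(\alpha+\beta)(\alpha+\beta+2)$, $\epsilon_1=2\tau_0^2+(1-\alpha^2)\tau_3+2\tau_0\tau_3+2(\alpha+1)(\beta+1)(\tau_2^2-\tau_2)-(\alpha+1)(\alpha+\beta)\tau_0$, and $\epsilon_2=(\alpha+\beta)\big((\alpha+\beta+2)\tau_0+(\alpha+1)\tau_3\big)$.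
   Context: $L=x(1-x)\partial_x^2+\big(\alpha+1-(\alpha+\beta+2)x\big)\partial_x$ with real $\alpha,\beta$, $X$ is multiplication by $x$, and $M=\tau_1XL+\tau_2LX+\tau_3X+\tau_0$ with real $\tau_0,\tau_1,\tau_2,\tau_3$. $[a,b]=ab-ba$ and $\{a,b\}=ab+ba$; constants denote multiples of the identity. *)

(* Differential operators with polynomial coefficients are
   modelled by their (faithful, in characteristic 0) action on polynomials
   {poly R}; operator identities are stated as equalities of these maps. *)
From HB Require Import structures.
From mathcomp Require Import all_boot all_order all_algebra.
Set Implicit Arguments. Unset Strict Implicit. Unset Printing Implicit Defensive.
Import Order.TTheory GRing.Theory Num.Theory.
Local Open Scope ring_scope.

Definition op (R : realFieldType) := {poly R} -> {poly R}.

Definition Lop (R : realFieldType) (a b : R) : op R := fun p =>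
  'X * (1 - 'X) * p^`(2) + ((a + 1)%:P - (a + b + 2) *: 'X) * p^`().

Definition Xop (R : realFieldType) : op R := fun p => 'X * p.

Definition Mop (R : realFieldType) (a b t0 t1 t2 t3 : R) : op R := fun p =>
  t1 *: Xop (Lop a b p) + t2 *: Lop a b (Xop p) + t3 *: Xop p + t0 *: p.

Definition opadd (R : realFieldType) (A B : op R) : op R := fun p => A p + B p.
Definition opscale (R : realFieldType) (c : R) (A : op R) : op R := fun p => c *: A p.
Definition opmul (R : realFieldType) (A B : op R) : op R := fun p => A (B p).
Definition opconst (R : realFieldType) (c : R) : op R := fun p => c *: p.
Definition comm (R : realFieldType) (A B : op R) : op R :=
  fun p => A (B p) - B (A p).
Definition acomm (R : realFieldType) (A B : op R) : op R :=
  fun p => A (B p) + B (A p).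

From HB Require Import structures.
From mathcomp Require Import all_boot all_order all_algebra.
From mathcomp Require Import ring.
Import Order.TTheory GRing.Theory Num.Theory.
Local Open Scope ring_scope.
Set Implicit Arguments.
Unset Strict Implicit.

(* L, M, and hence every operator in the two identities, are differential
   operators with polynomial coefficients.  Writing each one in the normal form
   sum_i c_i(x) d^i, with the c_i given by coefficient lists whose entries are
   polynomials in alpha, beta and the tau_i, composition is computed
   symbolically by the Leibniz rule d o (c B) = c' B + c (d o B).  Both
   identities then reduce to finitely many polynomial identities in the
   parameters, closed by [ring]. *)

#[local] Arguments Poly {R} s : simpl never.

Section CoefficientLists.
Variable R : comNzRingType.
Implicit Types (s t : seq R) (c : R).

Fixpoint seq_add s t :=
  match s, t with
  | [::], _ => t
  | _, [::] => s
  | a :: s', b :: t' => (a + b) :: seq_add s' t'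
  end.

Definition seq_scale c s := map ( *%R c) s.

Fixpoint seq_mul s t :=
  if s is a :: s' then seq_add (seq_scale a t) (0 :: seq_mul s' t) else [::].

Fixpoint seq_deriv s :=
  if s is _ :: s' then seq_add s' (0 :: seq_deriv s') else [::].

Fixpoint seq_vanish s : Prop :=
  if s is a :: s' then a = 0 /\ seq_vanish s' else True.

Lemma Poly_nil : Poly [::] = 0 :> {poly R}.
Proof. by []. Qed.

Lemma Poly_cons a s : Poly (a :: s) = Poly s * 'X + a%:P.
Proof. exact: cons_poly_def. Qed.

Lemma Poly_seq_add s t : Poly (seq_add s t) = Poly s + Poly t.
Proof.
elim: s t => [|a s IHs] [|b t]; rewrite /= ?add0r ?addr0 //.
by rewrite !Poly_cons IHs polyCD; ring.
Qed.

Lemma Poly_seq_scale c s : Poly (seq_scale c s) = c%:P * Poly s.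
Proof.
by elim: s => [|a s IHs]; rewrite /= ?mulr0 // !Poly_cons IHs polyCM; ring.
Qed.

Lemma Poly_seq_mul s t : Poly (seq_mul s t) = Poly s * Poly t.
Proof.
elim: s => [|a s IHs]; first by rewrite mul0r.
by rewrite /= Poly_seq_add Poly_seq_scale !Poly_cons IHs polyC0; ring.
Qed.

Lemma Poly_seq_deriv s : Poly (seq_deriv s) = (Poly s)^`().
Proof.
elim: s => [|a s IHs]; first by rewrite deriv0.
rewrite /= Poly_seq_add !Poly_cons IHs polyC0.
by rewrite derivD derivC derivM derivX; ring.
Qed.

Lemma Poly_seq_vanish s : seq_vanish s -> Poly s = 0.
Proof. by elim: s => [|a s IHs] //= [-> /IHs]; rewrite Poly_cons => ->; ring. Qed.

End CoefficientLists.

Section DifferentialOperators.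
Variable R : comNzRingType.
Implicit Types (s : seq R) (c : R) (A B : seq (seq R)) (q r : {poly R}).

(* [A] encodes the operator sum_i (Poly A`_i) d^i. *)
Fixpoint dapply A q : {poly R} :=
  if A is a :: A' then Poly a * q + dapply A' q^`() else 0.

Fixpoint dadd A B :=
  match A, B with
  | [::], _ => B
  | _, [::] => A
  | a :: A', b :: B' => seq_add a b :: dadd A' B'
  end.

Definition dscale c A := map (seq_scale c) A.

Definition dsub A B := dadd A (dscale (-1) B).

Definition dconst c := [:: [:: c]].

Definition dlmul s A := map (seq_mul s) A.

Fixpoint dderivl A :=
  if A is a :: A' then seq_deriv a :: dadd (dderivl A') [:: a] else [::].

Fixpoint dcomp A B :=
  if A is a :: A' then dadd (dlmul a B) (dcomp A' (dderivl B)) else [::].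

Fixpoint dvanish A : Prop :=
  if A is a :: A' then seq_vanish a /\ dvanish A' else True.

Lemma dapplyB A q r : dapply A (q - r) = dapply A q - dapply A r.
Proof.
by elim: A q r => [|a A IHA] q r /=; rewrite ?subr0 // derivB IHA; ring.
Qed.

Lemma dapply_add A B q : dapply (dadd A B) q = dapply A q + dapply B q.
Proof.
elim: A B q => [|a A IHA] [|b B] q /=; rewrite ?add0r ?addr0 //.
by rewrite Poly_seq_add IHA; ring.
Qed.

Lemma dapply_scale c A q : dapply (dscale c A) q = c *: dapply A q.
Proof.
elim: A q => [|a A IHA] q /=; first by rewrite scaler0.
by rewrite Poly_seq_scale IHA -!mul_polyC; ring.
Qed.

Lemma dapply_sub A B q : dapply (dsub A B) q = dapply A q - dapply B q.
Proof. by rewrite dapply_add dapply_scale scaleN1r. Qed.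

Lemma dapply_const c q : dapply (dconst c) q = c *: q.
Proof. by rewrite /= Poly_cons Poly_nil mul0r add0r addr0 mul_polyC. Qed.

Lemma dapply_mull s A q : dapply (dlmul s A) q = Poly s * dapply A q.
Proof.
elim: A q => [|a A IHA] q /=; first by rewrite mulr0.
by rewrite Poly_seq_mul IHA; ring.
Qed.

Lemma dapply_derivl A q : dapply (dderivl A) q = (dapply A q)^`().
Proof.
elim: A q => [|a A IHA] q /=; first by rewrite deriv0.
by rewrite dapply_add IHA /= Poly_seq_deriv derivD derivM; ring.
Qed.

Lemma dapply_comp A B q : dapply (dcomp A B) q = dapply A (dapply B q).
Proof.
elim: A B => [|a A IHA] B //=.
by rewrite dapply_add dapply_mull IHA dapply_derivl.
Qed.

Lemma dapply_vanish A q : dvanish A -> dapply A q = 0.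
Proof.
elim: A q => [|a A IHA] q //= [/Poly_seq_vanish -> /IHA ->].
by rewrite mul0r addr0.
Qed.

Lemma dapply_eq A B q : dvanish (dsub A B) -> dapply A q = dapply B q.
Proof. by move/(dapply_vanish q)/eqP; rewrite dapply_sub subr_eq0 => /eqP. Qed.

End DifferentialOperators.

Section HypergeometricOperators.
Variable R : realFieldType.
Implicit Types (a b : R) (q : {poly R}).

Definition Ldiff a b : seq (seq R) :=
  [:: [::]; [:: a + 1; - (a + b + 2)]; [:: 0; 1; -1]].

Definition Xdiff : seq (seq R) := [:: [:: 0; 1]].

Lemma Lop_dapply a b q : Lop a b q = dapply (Ldiff a b) q.
Proof.
by rewrite /Lop derivSn derivn1 /= !Poly_cons Poly_nil -mul_polyC; ring.
Qed.

Lemma Xop_dapply q : Xop q = dapply Xdiff q.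
Proof. by rewrite /Xop /= !Poly_cons Poly_nil; ring. Qed.

(* The normal form of M = X L + t2 [L, X] + t3 X + t0 when t1 = 1 - t2. *)
Definition Mdiff a b (t0 t2 t3 : R) : seq (seq R) :=
  [:: [:: t0 + (a + 1) * t2; t3 - (a + b + 2) * t2];
      [:: 0; a + 1 + 2 * t2; - (a + b + 2) - 2 * t2];
      [:: 0; 0; 1; -1]].

Lemma Mop_dapply a b (t0 t1 t2 t3 : R) :
  t1 + t2 = 1 -> Mop a b t0 t1 t2 t3 =1 dapply (Mdiff a b t0 t2 t3).
Proof.
move=> t12 q; have -> : t1 = 1 - t2 by rewrite -t12 addrK.
rewrite /Mop -[_ *: q]dapply_const !Xop_dapply !Lop_dapply -!dapply_comp.
rewrite -!(dapply_add, dapply_scale).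
by apply: dapply_eq; rewrite /=; repeat split; ring.
Qed.

End HypergeometricOperators.

Unset Implicit Arguments.

Theorem mainTheorem8 (R : realFieldType) (alpha beta t0 t1 t2 t3 : R) :
  t1 + t2 = 1 ->
  let A1 := Lop alpha beta in
  let A2 := Mop alpha beta t0 t1 t2 t3 in
  let A3 := comm A1 A2 in
  let a1 : R := -2 in
  let a2 : R := 2 in
  let delta := alpha * (alpha + beta + 1) + beta - 4 * t0 - 2 * t3 in
  let g1 := 1 - alpha ^+ 2 + 4 * (t0 + t2 - t2 ^+ 2) in
  let g2 := - ((alpha + beta) * (alpha + beta + 2)) in
  let e1 := 2 * t0 ^+ 2 + (1 - alpha ^+ 2) * t3 + 2 * t0 * t3
            + 2 * (alpha + 1) * (beta + 1) * (t2 ^+ 2 - t2)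
            - (alpha + 1) * (alpha + beta) * t0 in
  let e2 := (alpha + beta) * ((alpha + beta + 2) * t0 + (alpha + 1) * t3) in
  (forall p : {poly R},
     comm A2 A3 p =
       a1 *: acomm A1 A2 p + a2 *: A2 (A2 p) + g1 *: A1 p + delta *: A2 p
       + e1 *: p) /\
  (forall p : {poly R},
     comm A3 A1 p =
       a2 *: acomm A1 A2 p + a1 *: A1 (A1 p) + g2 *: A2 p + delta *: A1 p
       + e2 *: p).
Proof.
move=> t12; split=> p; rewrite /comm /acomm /=.
all: rewrite !(Mop_dapply _ _ _ _ t12) !Lop_dapply !dapplyB -!dapply_comp.
all: rewrite -[_ *: p]dapply_const -!(dapply_add, dapply_sub, dapply_scale).
all: apply: dapply_eq; rewrite /=; repeat split; ring.
Qed.
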